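(* Let $\alpha_s=(1+\rho)/\rho$ and for $x^n\in\{0,1\}^n$ let $\ell_s(x^n)=\lceil-\log_2(\alpha_s p(x^n))\rceil+1$. Define the Shannon–Fano–Elias–Gray (SFEG) code $\phi_{\mathrm{SFEG}}:\{0,1\}^n\to\{0,1\}^*$ by letting $\phi_{\mathrm{SFEG}}(x^n)$ be the binary string of length $\ell_s(x^n)$ consisting of the first $\ell_s(x^n)$ bits of the binary expansion of $F(x^n-1)+p(x^n)/2$, where $F$ is the cumulative distribution function under Gray order. Then (a) $\phi_{\mathrm{SFEG}}$ is uniquely decodable, i.e. the map $(x^n_{(1)},\dots,x^n_{(k)})\mapsto\phi_{\mathrm{SFEG}}(x^n_{(1)})\cdots\phi_{\mathrm{SFEG}}(x^n_{(k)})$ (concatenation), taken over all $k\ge 1$ and all $k$-tuples of sequences in $\{0,1\}^n$, is injective; and (b) for $X^n$ i.i.d. with distribution $p$, $$\mathbb{E}\big[|\phi_{\mathrm{SFEG}}(X^n)|\big]<nH(X)+2-\log_2\frac{1+\rho}{\rho},$$ where $|u|$ is the length of a string $u$ and $H(X)=-p(0)\log_2p(0)-p(1)\log_2p(1)$.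
   Context: Let $p$ be a probability distribution on $\{0,1\}$ with $p(0),p(1)\in(0,1)$ and $p(0)\ne p(1)$, and set $\rho=\max\{p(0)/p(1),p(1)/p(0)\}\in(1,\infty)$. For $x^n=(x_1,\dots,x_n)\in\{0,1\}^n$, $p(x^n)=\prod_{i=1}^n p(x_i)$. Gray code is the bijection $g:\{0,1\}^n\to\{0,1\}^n$, $g(x^n)=x^n\oplus(0,x_1,\dots,x_{n-1})$ (bitwise XOR of $x^n$ with its one-bit right shift). Gray order $\preceq_G$ on $\{0,1\}^n$ is defined by $x^n\preceq_G y^n$ iff $g^{-1}(x^n)\preceq_L g^{-1}(y^n)$, where $\preceq_L$ is the lexicographic order. For $x^n$ not the largest element, $x^n+1$ denotes its immediate successor in Gray order; for $x^n$ not the smallest element, $x^n-1$ denotes its immediate predecessor. The cumulative distribution function is $F(x^n)=\sum_{a^n\preceq_G x^n}p(a^n)$, with the convention $F(x^n-1):=0$ when $x^n$ is the smallest element in Gray order. Logarithms are base 2. *)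

From Stdlib Require Import Reals Lra Lia ZArith List.
Import ListNotations.
Open Scope R_scope.

(* Binary strings are lists of booleans; bit 0 = false, bit 1 = true. *)

Definition log2 (x : R) : R := ln x / ln 2.

Definition floorR (r : R) : Z := (up r - 1)%Z.
Definition ceilR (r : R) : Z := (- floorR (- r))%Z.

Definition pseq (p : bool -> R) (x : list bool) : R :=
  fold_right (fun b r => p b * r) 1 x.

Fixpoint all_seqs (n : nat) : list (list bool) :=
  match n with
  | O => [ [] ]
  | S m => map (cons false) (all_seqs m) ++ map (cons true) (all_seqs m)
  end.

Definition sumR {A : Type} (f : A -> R) (l : list A) : R :=
  fold_right (fun a s => f a + s) 0 l.

(* Gray code g(x) = x XOR (0, x_1, ..., x_{n-1}) *)
Fixpoint gray_aux (prev : bool) (x : list bool) : list bool :=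
  match x with
  | [] => []
  | a :: t => xorb a prev :: gray_aux a t
  end.
Definition gray (x : list bool) : list bool := gray_aux false x.

(* its inverse: x_i = y_1 xor ... xor y_i *)
Fixpoint gray_inv_aux (acc : bool) (y : list bool) : list bool :=
  match y with
  | [] => []
  | b :: t => xorb acc b :: gray_inv_aux (xorb acc b) t
  end.
Definition gray_inv (y : list bool) : list bool := gray_inv_aux false y.

Fixpoint lex_le (x y : list bool) : bool :=
  match x, y with
  | [], _ => true
  | _ :: _, [] => false
  | a :: x', b :: y' =>
      if Bool.eqb a b then lex_le x' y' else andb (negb a) b
  end.
Definition lex_lt (x y : list bool) : bool :=
  andb (lex_le x y) (negb (lex_le y x)).

Definition gray_le (x y : list bool) : bool := lex_le (gray_inv x) (gray_inv y).
Definition gray_lt (x y : list bool) : bool := lex_lt (gray_inv x) (gray_inv y).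

Definition Fgray (p : bool -> R) (n : nat) (x : list bool) : R :=
  sumR (fun a => if gray_le a x then pseq p a else 0) (all_seqs n).

(* F(x^n - 1): sum of p(a) over a strictly below x in Gray order
   (equals F of the Gray predecessor, and 0 for the smallest element) *)
Definition Fgray_prev (p : bool -> R) (n : nat) (x : list bool) : R :=
  sumR (fun a => if gray_lt a x then pseq p a else 0) (all_seqs n).

(* i-th bit (i >= 1) of the binary expansion of t in [0,1) *)
Definition bin_digit (t : R) (i : nat) : bool := Z.odd (floorR (t * 2 ^ i)).

Definition rho (p : bool -> R) : R := Rmax (p false / p true) (p true / p false).

Definition alpha_s (p : bool -> R) : R := (1 + rho p) / rho p.

Definition ell_s (p : bool -> R) (x : list bool) : Z :=
  (ceilR (- log2 (alpha_s p * pseq p x)) + 1)%Z.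

Definition sfeg (p : bool -> R) (n : nat) (x : list bool) : list bool :=
  map (fun i => bin_digit (Fgray_prev p n x + pseq p x / 2) (S i))
      (seq 0 (Z.to_nat (ell_s p x))).

Definition entropy (p : bool -> R) : R :=
  - (p false * log2 (p false)) - p true * log2 (p true).

(* Gray order lists the words so that consecutive words differ in
   one bit, hence have probabilities within a factor rho of each other.  So if
   x precedes y, the interval [Fbar x, Fbar y] contains, besides half of the
   masses of x and y, the mass of the Gray successor of x (or that successor is
   y), and symmetrically the predecessor of y; this gives
   |Fbar y - Fbar x| >= alpha_s p(x) / 2 >= 2^-l(x).  Hence the first l(x) bits
   of Fbar x cannot be a prefix of the codeword of any other y: the code is
   prefix-free, thus uniquely decodable.  The length bound is
   l(x) < -log2 (alpha_s p(x)) + 2 averaged over x. *)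

From Stdlib Require Import Reals Lra Lia ZArith List Bool FunctionalExtensionality.
Import ListNotations.
Open Scope R_scope.

Section Sums.
Context {A : Type}.
Implicit Types (f g : A -> R) (l : list A).

Lemma sumR_ext f g l : (forall a, f a = g a) -> sumR f l = sumR g l.
Proof. intros H; induction l as [|a l IH]; simpl; rewrite ?IH, ?H; auto. Qed.

Lemma sumR_plus f g l : sumR (fun a => f a + g a) l = sumR f l + sumR g l.
Proof. induction l as [|a l IH]; simpl; rewrite ?IH; lra. Qed.

Lemma sumR_minus f g l : sumR (fun a => f a - g a) l = sumR f l - sumR g l.
Proof. induction l as [|a l IH]; simpl; rewrite ?IH; lra. Qed.

Lemma sumR_scal f c l : sumR (fun a => c * f a) l = c * sumR f l.
Proof. induction l as [|a l IH]; simpl; rewrite ?IH; lra. Qed.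

Lemma sumR_app f l1 l2 : sumR f (l1 ++ l2) = sumR f l1 + sumR f l2.
Proof. induction l1 as [|a l1 IH]; simpl; rewrite ?IH; lra. Qed.

Lemma sumR_map {B : Type} f (h : B -> A) (l : list B) :
  sumR f (map h l) = sumR (fun b => f (h b)) l.
Proof. induction l as [|b l IH]; simpl; rewrite ?IH; auto. Qed.

Lemma sumR_le f g l : (forall a, f a <= g a) -> sumR f l <= sumR g l.
Proof. intros H; induction l as [|a l IH]; simpl; [lra|]. specialize (H a); lra. Qed.

Lemma sumR_lt f g l : l <> [] -> (forall a, f a < g a) -> sumR f l < sumR g l.
Proof.
  intros Hl H; destruct l as [|a l]; [congruence|]; simpl.
  pose proof (sumR_le f g l (fun a => Rlt_le _ _ (H a))). specialize (H a); lra.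
Qed.

Lemma sumR_ge0 f l : (forall a, 0 <= f a) -> 0 <= sumR f l.
Proof. intros H; induction l as [|a l IH]; simpl; [lra|]. specialize (H a); lra. Qed.

Lemma sumR_ge_term f l x : (forall a, 0 <= f a) -> In x l -> f x <= sumR f l.
Proof.
  intros H Hx; induction l as [|a l IH]; [contradiction|]; simpl.
  pose proof (sumR_ge0 f l H). destruct Hx as [->|Hx]; [lra|].
  specialize (IH Hx); specialize (H a); lra.
Qed.

Lemma sumR_ge_two_terms f l x z : (forall a, 0 <= f a) -> In x l -> In z l -> x <> z ->
  f x + f z <= sumR f l.
Proof.
  intros H Hx Hz Hne; induction l as [|a l IH]; [contradiction|]; simpl.
  destruct Hx as [->|Hx], Hz as [->|Hz].
  - contradiction.
  - pose proof (sumR_ge_term f l z H Hz); lra.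
  - pose proof (sumR_ge_term f l x H Hx); lra.
  - specialize (IH Hx Hz); specialize (H a); lra.
Qed.

End Sums.

Lemma sumR_all_seqs_S (f : list bool -> R) m : sumR f (all_seqs (S m)) =
  sumR (fun a => f (false :: a)) (all_seqs m) + sumR (fun a => f (true :: a)) (all_seqs m).
Proof. simpl all_seqs. rewrite sumR_app, !sumR_map. reflexivity. Qed.

Lemma in_all_seqs x : In x (all_seqs (length x)).
Proof.
  induction x as [|a x IH]; simpl; [auto|].
  rewrite in_app_iff. destruct a; [right|left]; apply in_map; auto.
Qed.

Lemma prefix_free_uniquely_decodable {A B : Type} (P : A -> Prop) (c : A -> list B) :
  (forall x y r, P x -> P y -> c x ++ r = c y -> x = y) ->
  (forall x, P x -> c x <> []) ->
  forall xs ys, Forall P xs -> Forall P ys -> concat (map c xs) = concat (map c ys) -> xs = ys.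
Proof.
  intros Hpf Hne xs; induction xs as [|x xs IH]; intros [|y ys] Hx Hy E; simpl in E; auto.
  - symmetry in E; apply app_eq_nil in E as [E _].
    apply Forall_cons_iff in Hy as [Hy _]; contradiction (Hne y Hy).
  - apply app_eq_nil in E as [E _].
    apply Forall_cons_iff in Hx as [Hx _]; contradiction (Hne x Hx).
  - apply Forall_cons_iff in Hx as [Hx Hxs]; apply Forall_cons_iff in Hy as [Hy Hys].
    assert (x = y) as <-.
    { destruct (app_eq_app _ _ _ _ E) as (r & [[E1 _]|[E1 _]]).
      - symmetry; apply (Hpf y x r); auto.
      - apply (Hpf x y r); auto. }
    apply app_inv_head in E. f_equal. auto.
Qed.

Lemma lex_le_refl x : lex_le x x = true.
Proof. induction x as [|a x IH]; simpl; auto. rewrite eqb_reflx; exact IH. Qed.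

Lemma lex_le_total x y : lex_le x y = false -> lex_le y x = true.
Proof.
  revert y; induction x as [|a x IH]; intros [|b y]; simpl; auto; try discriminate.
  destruct a, b; simpl; auto; discriminate.
Qed.

Lemma lex_le_antisym x y : lex_le x y = true -> lex_le y x = true -> x = y.
Proof.
  revert y; induction x as [|a x IH]; intros [|b y]; simpl; intros H1 H2; auto; try discriminate.
  destruct a, b; simpl in *; try discriminate; f_equal; auto.
Qed.

Lemma lex_le_trans x y z : lex_le x y = true -> lex_le y z = true -> lex_le x z = true.
Proof.
  revert y z; induction x as [|a x IH]; intros [|b y] [|c z]; simpl; intros H1 H2;
    auto; try discriminate.
  destruct a, b, c; simpl in *; try discriminate; eauto.
Qed.

Lemma lex_lt_negb x y : lex_lt x y = negb (lex_le y x).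
Proof.
  unfold lex_lt. destruct (lex_le y x) eqn:E; simpl.
  - apply andb_false_r.
  - rewrite (lex_le_total _ _ E); reflexivity.
Qed.

Lemma lex_le_app2l d x y : lex_le (d ++ x) (d ++ y) = lex_le x y.
Proof. induction d as [|c d IH]; simpl; auto. rewrite eqb_reflx; exact IH. Qed.

Lemma lex_le_zeros_l v : lex_le (repeat false (length v)) v = true.
Proof. induction v as [|[] v IH]; simpl; auto. Qed.

Lemma lex_le_ones_r u : lex_le u (repeat true (length u)) = true.
Proof. induction u as [|[] u IH]; simpl; auto. Qed.

Lemma ones_or_last_zero l :
  l = repeat true (length l) \/ exists d k, l = d ++ false :: repeat true k.
Proof.
  induction l as [|a l [E|(d & k & E)]]; simpl; auto.
  - destruct a; [left; rewrite E at 1; rewrite ?repeat_length; auto|].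
    right; exists [], (length l); simpl; rewrite E at 1; rewrite ?repeat_length; auto.
  - right; exists (a :: d), k; rewrite E; auto.
Qed.

Lemma zeros_or_last_one l :
  l = repeat false (length l) \/ exists d k, l = d ++ true :: repeat false k.
Proof.
  induction l as [|a l [E|(d & k & E)]]; simpl; auto.
  - destruct a; [|left; rewrite E at 1; rewrite ?repeat_length; auto].
    right; exists [], (length l); simpl; rewrite E at 1; rewrite ?repeat_length; auto.
  - right; exists (a :: d), k; rewrite E; auto.
Qed.

(* The lexicographic successor of [d ++ 0 1^k] is [d ++ 1 0^k]. *)
Lemma lex_lt_succ_le u v : length u = length v -> lex_le v u = false ->
  exists d k, u = d ++ false :: repeat true k /\ lex_le (d ++ true :: repeat false k) v = true.
Proof.
  revert v; induction u as [|a u IH]; intros [|b v] Hl H; simpl in *; try discriminate.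
  destruct a, b; simpl in *; try discriminate.
  - destruct (IH v ltac:(lia) H) as (d & k & -> & Hv). exists (true :: d), k; auto.
  - destruct (ones_or_last_zero u) as [E|(d & k & E)].
    + exists [], (length u); simpl; split; [rewrite E at 1; rewrite ?repeat_length; auto|].
      replace (length u) with (length v) by lia; apply lex_le_zeros_l.
    + exists (false :: d), k; rewrite E; auto.
  - destruct (IH v ltac:(lia) H) as (d & k & -> & Hv). exists (false :: d), k; auto.
Qed.

Lemma lex_lt_pred_ge u v : length u = length v -> lex_le v u = false ->
  exists d k, v = d ++ true :: repeat false k /\ lex_le u (d ++ false :: repeat true k) = true.
Proof.
  revert v; induction u as [|a u IH]; intros [|b v] Hl H; simpl in *; try discriminate.
  destruct a, b; simpl in *; try discriminate.
  - destruct (IH v ltac:(lia) H) as (d & k & -> & Hu). exists (true :: d), k; auto.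
  - destruct (zeros_or_last_one v) as [E|(d & k & E)].
    + exists [], (length v); simpl; split; [rewrite E at 1; rewrite ?repeat_length; auto|].
      replace (length v) with (length u) by lia; apply lex_le_ones_r.
    + exists (true :: d), k; rewrite E; auto.
  - destruct (IH v ltac:(lia) H) as (d & k & -> & Hu). exists (false :: d), k; auto.
Qed.

Lemma gray_inv_gray x : gray_inv (gray x) = x.
Proof.
  unfold gray, gray_inv; generalize false.
  induction x as [|a x IH]; intros b; simpl; auto.
  replace (xorb b (xorb a b)) with a by (destruct a, b; reflexivity). rewrite IH; auto.
Qed.

Lemma gray_gray_inv y : gray (gray_inv y) = y.
Proof.
  unfold gray, gray_inv; generalize false.
  induction y as [|a y IH]; intros b; simpl; auto.
  rewrite IH; f_equal; destruct a, b; reflexivity.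
Qed.

Lemma length_gray x : length (gray x) = length x.
Proof. unfold gray; generalize false; induction x; intros; simpl; auto. Qed.

Lemma length_gray_inv y : length (gray_inv y) = length y.
Proof. unfold gray_inv; generalize false; induction y; intros; simpl; auto. Qed.

Lemma gray_aux_app b d : exists b', forall r, gray_aux b (d ++ r) = gray_aux b d ++ gray_aux b' r.
Proof.
  revert b; induction d as [|a d IH]; intros b; simpl; [eauto|].
  destruct (IH a) as [b' Hb']; exists b'; intros r; rewrite Hb'; auto.
Qed.

Lemma gray_aux_repeat b k : gray_aux b (repeat b k) = repeat false k.
Proof. induction k as [|k IH]; simpl; rewrite ?IH, ?xorb_nilpotent; auto. Qed.

Definition one_bit_apart (x z : list bool) : Prop :=
  exists c b t, x = c ++ b :: t /\ z = c ++ negb b :: t.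

Lemma one_bit_apart_sym x z : one_bit_apart x z -> one_bit_apart z x.
Proof. intros (c & b & t & -> & ->); exists c, (negb b), t; rewrite negb_involutive; auto. Qed.

Lemma gray_lex_neighbours d k :
  one_bit_apart (gray (d ++ false :: repeat true k)) (gray (d ++ true :: repeat false k)).
Proof.
  unfold gray; destruct (gray_aux_app false d) as [b Hb]; rewrite !Hb; simpl.
  exists (gray_aux false d), (xorb false b), (gray_aux false (repeat true k)).
  split; [reflexivity|]. do 2 f_equal.
  destruct k as [|k]; simpl; rewrite ?gray_aux_repeat; auto.
Qed.

Lemma gray_inv_inj x y : gray_inv x = gray_inv y -> x = y.
Proof. intros H; rewrite <- (gray_gray_inv x), <- (gray_gray_inv y), H; auto. Qed.

Lemma gray_lt_negb x y : gray_lt x y = negb (gray_le y x).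
Proof. apply lex_lt_negb. Qed.

Lemma gray_le_refl x : gray_le x x = true.
Proof. apply lex_le_refl. Qed.

Lemma gray_lt_irrefl x : gray_lt x x = false.
Proof. rewrite gray_lt_negb, gray_le_refl; auto. Qed.

Lemma gray_ltW x y : gray_lt x y = true -> gray_le x y = true.
Proof. unfold gray_lt, lex_lt; intros H; apply andb_prop in H; tauto. Qed.

Lemma gray_lt_trans x y z : gray_lt x y = true -> gray_lt y z = true -> gray_lt x z = true.
Proof.
  rewrite !gray_lt_negb; unfold gray_le; intros Hxy Hyz.
  apply negb_true_iff in Hxy, Hyz; apply negb_true_iff.
  destruct (lex_le (gray_inv z) (gray_inv x)) eqn:E; auto.
  rewrite (lex_le_trans _ _ _ E (lex_le_total _ _ Hxy)) in Hyz; discriminate.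
Qed.

Lemma gray_le_neq_lt x y : gray_le x y = true -> x <> y -> gray_lt x y = true.
Proof.
  rewrite gray_lt_negb; unfold gray_le; intros H Hne; apply negb_true_iff.
  destruct (lex_le (gray_inv y) (gray_inv x)) eqn:E; auto.
  contradiction Hne; apply gray_inv_inj, lex_le_antisym; auto.
Qed.

Lemma gray_lt_total x y : x <> y -> gray_lt x y = true \/ gray_lt y x = true.
Proof.
  intros Hne; rewrite !gray_lt_negb.
  destruct (gray_le y x) eqn:E; auto; right.
  apply negb_true_iff; destruct (gray_le x y) eqn:E'; auto.
  contradiction Hne; apply gray_inv_inj, lex_le_antisym; auto.
Qed.

Lemma gray_lt_succ_adjacent x y : length x = length y -> gray_lt x y = true ->
  exists z, length z = length x /\ gray_lt x z = true /\ gray_le z y = true /\ one_bit_apart x z.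
Proof.
  intros Hl H; rewrite gray_lt_negb in H; apply negb_true_iff in H.
  destruct (lex_lt_succ_le (gray_inv x) (gray_inv y)) as (d & k & Hx & Hy);
    [rewrite !length_gray_inv; auto | auto |].
  exists (gray (d ++ true :: repeat false k)).
  unfold gray_lt, gray_le; rewrite lex_lt_negb, gray_inv_gray, Hx, lex_le_app2l.
  repeat split; auto.
  - rewrite length_gray, <- (length_gray_inv x), Hx, !length_app; simpl; rewrite !repeat_length; auto.
  - rewrite <- (gray_gray_inv x), Hx; apply gray_lex_neighbours.
Qed.

Lemma gray_lt_pred_adjacent x y : length x = length y -> gray_lt x y = true ->
  exists z, length z = length y /\ gray_le x z = true /\ gray_lt z y = true /\ one_bit_apart y z.
Proof.
  intros Hl H; rewrite gray_lt_negb in H; apply negb_true_iff in H.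
  destruct (lex_lt_pred_ge (gray_inv x) (gray_inv y)) as (d & k & Hy & Hx);
    [rewrite !length_gray_inv; auto | auto |].
  exists (gray (d ++ false :: repeat true k)).
  unfold gray_lt, gray_le; rewrite lex_lt_negb, gray_inv_gray, Hy, lex_le_app2l.
  repeat split; auto.
  - rewrite length_gray, <- (length_gray_inv y), Hy, !length_app; simpl; rewrite !repeat_length; auto.
  - rewrite <- (gray_gray_inv y), Hy; apply one_bit_apart_sym, gray_lex_neighbours.
Qed.

Lemma floorR_spec r : IZR (floorR r) <= r < IZR (floorR r) + 1.
Proof. unfold floorR; destruct (archimed r); rewrite minus_IZR; lra. Qed.

Lemma floorR_unique k r : IZR k <= r < IZR k + 1 -> floorR r = k.
Proof.
  intros Hk; unfold floorR.
  assert (up r = k + 1)%Z by (symmetry; apply tech_up; rewrite plus_IZR; lra). lia.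
Qed.

Lemma ceilR_spec r : r <= IZR (ceilR r) < r + 1.
Proof. unfold ceilR; destruct (floorR_spec (- r)); rewrite opp_IZR; lra. Qed.

Lemma floorR_double t :
  floorR (2 * t) = (2 * floorR t)%Z \/ floorR (2 * t) = (2 * floorR t + 1)%Z.
Proof.
  destruct (floorR_spec t) as [H1 H2].
  destruct (Rlt_le_dec t (IZR (floorR t) + / 2)); [left|right]; apply floorR_unique;
    rewrite ?plus_IZR, mult_IZR; lra.
Qed.

(* Each binary digit fixes the parity of the next dyadic floor, so equal
   digits propagate equal floors. *)
Lemma bin_digits_floorR_eq L t t' : 0 <= t < 1 -> 0 <= t' < 1 ->
  (forall i, (i < L)%nat -> bin_digit t (S i) = bin_digit t' (S i)) ->
  floorR (t * 2 ^ L) = floorR (t' * 2 ^ L).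
Proof.
  intros Ht Ht'; induction L as [|L IH]; intros Hd.
  - simpl; rewrite !Rmult_1_r, (floorR_unique 0 t), (floorR_unique 0 t'); auto; simpl; lra.
  - assert (E : floorR (t * 2 ^ L) = floorR (t' * 2 ^ L)) by (apply IH; auto).
    specialize (Hd L (Nat.lt_succ_diag_r L)); unfold bin_digit in Hd.
    replace (t * 2 ^ S L) with (2 * (t * 2 ^ L)) in * by (simpl; ring).
    replace (t' * 2 ^ S L) with (2 * (t' * 2 ^ L)) in * by (simpl; ring).
    destruct (floorR_double (t * 2 ^ L)) as [A|A], (floorR_double (t' * 2 ^ L)) as [B|B];
      rewrite A, B, E in *; auto;
      rewrite ?Z.odd_add, ?Z.odd_mul in Hd; discriminate.
Qed.

Lemma floorR_eq_dist_lt1 a b : floorR a = floorR b -> Rabs (a - b) < 1.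
Proof.
  intros E; destruct (floorR_spec a), (floorR_spec b); rewrite E in *.
  apply Rabs_def1; lra.
Qed.

Lemma map_seq_prefix {A : Type} (f g : nat -> A) L M r :
  map f (seq 0 L) ++ r = map g (seq 0 M) -> forall i, (i < L)%nat -> f i = g i.
Proof.
  intros E i Hi.
  assert (Hi' : (i < M)%nat).
  { apply (f_equal (@length A)) in E; rewrite length_app, !length_map, !length_seq in E; lia. }
  apply (f_equal (fun l => nth_error l i)) in E.
  rewrite nth_error_app1, !nth_error_map, !nth_error_seq in E by (rewrite length_map, length_seq; auto).
  apply Nat.ltb_lt in Hi, Hi'; rewrite Hi, Hi' in E; injection E; auto.
Qed.

Lemma ln2_pos : 0 < ln 2.
Proof. rewrite <- ln_1; apply ln_increasing; lra. Qed.

Lemma log2_mult a b : 0 < a -> 0 < b -> log2 (a * b) = log2 a + log2 b.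
Proof. intros; unfold log2; rewrite ln_mult by auto; pose proof ln2_pos; field; lra. Qed.

Lemma Rpower2_neg_log2 q : 0 < q -> Rpower 2 (- log2 q) = / q.
Proof.
  intros Hq; unfold Rpower, log2; pose proof ln2_pos.
  replace (- (ln q / ln 2) * ln 2) with (- ln q) by (field; lra).
  rewrite exp_Ropp, exp_ln; auto.
Qed.

Lemma sfe_length_bounds q : 0 < q < 2 ->
  let l := (ceilR (- log2 q) + 1)%Z in
  (1 <= l)%Z /\ 2 <= 2 ^ Z.to_nat l * q /\ IZR l < - log2 q + 2.
Proof.
  intros [Hq0 Hq2] l; pose proof ln2_pos.
  destruct (ceilR_spec (- log2 q)) as [C1 C2].
  assert (Hlog : - log2 q > -1).
  { unfold log2; assert (ln q < ln 2) by (apply ln_increasing; lra).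
    enough (ln q / ln 2 < 1) by lra.
    apply (Rmult_lt_reg_r (ln 2)); auto; unfold Rdiv; rewrite Rmult_assoc, Rinv_l; lra. }
  assert (Hc : (0 <= ceilR (- log2 q))%Z) by (assert (-1 < ceilR (- log2 q))%Z by (apply lt_IZR; lra); lia).
  split; [unfold l; lia|]; split; [|unfold l; rewrite plus_IZR; lra].
  unfold l; rewrite Z2Nat.inj_add by lia; simpl Z.to_nat; rewrite pow_add.
  assert (Hp : / q <= 2 ^ Z.to_nat (ceilR (- log2 q))).
  { rewrite <- Rpower_pow, <- Rpower2_neg_log2, INR_IZR_INZ, Z2Nat.id by (auto; lra).
    apply Rle_Rpower; lra. }
  apply (Rmult_le_compat_r q) in Hp; [|lra]; rewrite Rinv_l in Hp by lra.
  simpl pow; lra.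
Qed.

Section SFEG.
Variable p : bool -> R.
Hypothesis p_pos : forall b, 0 < p b.
Hypothesis p_sum1 : p false + p true = 1.
Hypothesis p_neq : p false <> p true.

Lemma pseq_pos x : 0 < pseq p x.
Proof. induction x as [|b x IH]; simpl; [lra|]. apply Rmult_lt_0_compat; auto. Qed.

Lemma pseq_le1 x : pseq p x <= 1.
Proof.
  induction x as [|b x IH]; simpl; [lra|].
  assert (p b <= 1) by (pose proof (p_pos (negb b)); destruct b; simpl in *; lra).
  pose proof (pseq_pos x); pose proof (p_pos b); nra.
Qed.

Lemma pseq_app x y : pseq p (x ++ y) = pseq p x * pseq p y.
Proof. induction x as [|b x IH]; simpl; rewrite ?IH; ring. Qed.

Lemma sumR_pseq_all_seqs m : sumR (pseq p) (all_seqs m) = 1.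
Proof.
  induction m as [|m IH]; [simpl; lra|].
  rewrite sumR_all_seqs_S; simpl pseq; rewrite !sumR_scal, IH; lra.
Qed.

Lemma sumR_pseq_log2 m :
  sumR (fun x => pseq p x * log2 (pseq p x)) (all_seqs m) = - INR m * entropy p.
Proof.
  induction m as [|m IH]; [simpl; unfold log2; rewrite ln_1; lra|].
  rewrite sumR_all_seqs_S.
  assert (Hcons : forall b, (fun x => pseq p (b :: x) * log2 (pseq p (b :: x))) =
            (fun x => p b * log2 (p b) * pseq p x + p b * (pseq p x * log2 (pseq p x)))).
  { intros b; apply functional_extensionality; intros x; simpl pseq.
    rewrite log2_mult by apply p_pos || apply pseq_pos; ring. }
  rewrite !Hcons, !sumR_plus, !sumR_scal, IH, sumR_pseq_all_seqs, S_INR.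
  unfold entropy; replace (p true) with (1 - p false) by lra; ring.
Qed.

Lemma rho_gt1 : 1 < rho p.
Proof.
  pose proof (p_pos false); pose proof (p_pos true); unfold rho.
  destruct (Rtotal_order (p true) (p false)) as [Hlt|[Heq|Hgt]].
  - apply (Rlt_le_trans _ (p false / p true)); [|apply Rmax_l].
    apply (Rmult_lt_reg_r (p true)); auto; unfold Rdiv; rewrite Rmult_assoc, Rinv_l; lra.
  - symmetry in Heq; contradiction.
  - apply (Rlt_le_trans _ (p true / p false)); [|apply Rmax_r].
    apply (Rmult_lt_reg_r (p false)); auto; unfold Rdiv; rewrite Rmult_assoc, Rinv_l; lra.
Qed.

Lemma p_le_rho_p_negb b : p b <= rho p * p (negb b).
Proof.
  pose proof (p_pos (negb b)).
  replace (p b) with (p b / p (negb b) * p (negb b)) at 1 by (field; lra).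
  apply Rmult_le_compat_r; [lra|]; unfold rho; destruct b; simpl; [apply Rmax_r|apply Rmax_l].
Qed.

Lemma pseq_one_bit_apart x z : one_bit_apart x z -> pseq p x <= rho p * pseq p z.
Proof.
  intros (c & b & t & -> & ->); rewrite !pseq_app; simpl pseq.
  pose proof (pseq_pos c); pose proof (pseq_pos t); pose proof (p_le_rho_p_negb b).
  replace (rho p * (pseq p c * (p (negb b) * pseq p t)))
    with (pseq p c * (rho p * p (negb b) * pseq p t)) by ring.
  apply Rmult_le_compat_l; [lra|]; apply Rmult_le_compat_r; lra.
Qed.

Lemma alpha_s_gt0 : 0 < alpha_s p.
Proof. pose proof rho_gt1; unfold alpha_s; apply Rdiv_lt_0_compat; lra. Qed.

Lemma alpha_s_pseq_range x : 0 < alpha_s p * pseq p x < 2.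
Proof.
  pose proof rho_gt1; pose proof alpha_s_gt0; pose proof (pseq_pos x); pose proof (pseq_le1 x).
  assert (alpha_s p < 2).
  { unfold alpha_s; apply (Rmult_lt_reg_r (rho p)); [lra|].
    unfold Rdiv; rewrite Rmult_assoc, Rinv_l; lra. }
  split; [|apply (Rle_lt_trans _ (alpha_s p))]; nra.
Qed.

(* The point whose binary expansion is truncated: the midpoint of the
   interval [F(x^n - 1), F(x^n)). *)
Definition Fbar n x := Fgray_prev p n x + pseq p x / 2.

Lemma Fbar_range n x : length x = n -> 0 <= Fbar n x < 1.
Proof.
  intros <-; unfold Fbar, Fgray_prev; pose proof (pseq_pos x).
  set (below := fun a => if gray_lt a x then pseq p a else 0).
  assert (Hbelow : forall a, 0 <= below a <= pseq p a).
  { intros a; unfold below; destruct (gray_lt a x); pose proof (pseq_pos a); lra. }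
  assert (Habove : forall a, 0 <= pseq p a - below a) by (intros a; specialize (Hbelow a); lra).
  pose proof (sumR_ge_term _ _ x Habove (in_all_seqs x)) as Hx.
  rewrite sumR_minus, sumR_pseq_all_seqs in Hx; unfold below at 1 in Hx.
  rewrite gray_lt_irrefl in Hx.
  pose proof (sumR_ge0 below (all_seqs (length x)) (fun a => proj1 (Hbelow a))); lra.
Qed.

Lemma Fgray_prev_sub n x y : gray_lt x y = true ->
  Fgray_prev p n y - Fgray_prev p n x =
  sumR (fun a => if gray_le x a && gray_lt a y then pseq p a else 0) (all_seqs n).
Proof.
  intros Hxy; unfold Fgray_prev; rewrite <- sumR_minus; apply sumR_ext; intros a.
  destruct (gray_lt a x) eqn:Hax.
  - rewrite (gray_lt_trans _ _ _ Hax Hxy).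
    rewrite gray_lt_negb in Hax; apply negb_true_iff in Hax; rewrite Hax; simpl; lra.
  - rewrite gray_lt_negb in Hax; apply negb_false_iff in Hax; rewrite Hax; simpl.
    destruct (gray_lt a y); lra.
Qed.

Lemma Fbar_sub n x y : gray_lt x y = true ->
  Fbar n y - Fbar n x =
  sumR (fun a => if gray_le x a && gray_lt a y then pseq p a else 0) (all_seqs n)
  + (pseq p y - pseq p x) / 2.
Proof. intros Hxy; unfold Fbar; rewrite <- Fgray_prev_sub by auto; lra. Qed.

Lemma between_nonneg x y a : 0 <= (if gray_le x a && gray_lt a y then pseq p a else 0).
Proof. destruct (_ && _); [pose proof (pseq_pos a)|]; lra. Qed.

Lemma alpha_s_mul_le c d : 0 < rho p -> (1 + rho p) * c <= 2 * rho p * d -> alpha_s p * c <= 2 * d.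
Proof.
  intros Hr H; unfold alpha_s; apply (Rmult_le_reg_l (rho p)); auto.
  replace (rho p * ((1 + rho p) / rho p * c)) with ((1 + rho p) * c) by (field; lra); lra.
Qed.

(* The Gray successor [z] of [x] has probability at least [p(x)/rho]; it
   lies between [x] and [y], or is [y] itself. *)
Lemma Fbar_gap_l n x y : length x = n -> length y = n -> gray_lt x y = true ->
  alpha_s p * pseq p x <= 2 * (Fbar n y - Fbar n x).
Proof.
  intros Hx Hy Hxy; pose proof rho_gt1; rewrite (Fbar_sub n x y Hxy).
  destruct (gray_lt_succ_adjacent x y) as (z & Hz & Hxz & Hzy & Hadj); [congruence|auto|].
  pose proof (pseq_one_bit_apart x z Hadj); pose proof (pseq_pos x); pose proof (pseq_pos y).
  assert (Hin : forall w, length w = n -> In w (all_seqs n)) by (intros w <-; apply in_all_seqs).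
  apply alpha_s_mul_le; [lra|].
  destruct (list_eq_dec bool_dec z y) as [->|Hne].
  - pose proof (sumR_ge_term _ _ x (between_nonneg x y) (Hin x Hx)) as Hs.
    cbv beta in Hs; rewrite gray_le_refl, Hxy in Hs; simpl in Hs; nra.
  - assert (Hxz' : x <> z) by (intros <-; rewrite gray_lt_irrefl in Hxz; discriminate).
    pose proof (sumR_ge_two_terms _ _ x z (between_nonneg x y) (Hin x Hx) (Hin z ltac:(congruence)) Hxz') as Hs.
    cbv beta in Hs; rewrite gray_le_refl, Hxy, (gray_ltW _ _ Hxz), (gray_le_neq_lt _ _ Hzy Hne) in Hs.
    simpl in Hs; pose proof (pseq_pos z); nra.
Qed.

Lemma Fbar_gap_r n x y : length x = n -> length y = n -> gray_lt x y = true ->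
  alpha_s p * pseq p y <= 2 * (Fbar n y - Fbar n x).
Proof.
  intros Hx Hy Hxy; pose proof rho_gt1; rewrite (Fbar_sub n x y Hxy).
  destruct (gray_lt_pred_adjacent x y) as (z & Hz & Hxz & Hzy & Hadj); [congruence|auto|].
  pose proof (pseq_one_bit_apart y z Hadj); pose proof (pseq_pos x); pose proof (pseq_pos y).
  assert (Hin : forall w, length w = n -> In w (all_seqs n)) by (intros w <-; apply in_all_seqs).
  apply alpha_s_mul_le; [lra|].
  destruct (list_eq_dec bool_dec x z) as [<-|Hne].
  - pose proof (sumR_ge_term _ _ x (between_nonneg x y) (Hin x Hx)) as Hs.
    cbv beta in Hs; rewrite gray_le_refl, Hxy in Hs; simpl in Hs; nra.
  - pose proof (sumR_ge_two_terms _ _ x z (between_nonneg x y) (Hin x Hx) (Hin z ltac:(congruence)) Hne) as Hs.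
    cbv beta in Hs; rewrite gray_le_refl, Hxy, Hxz, Hzy in Hs.
    simpl in Hs; pose proof (pseq_pos z); nra.
Qed.

Lemma sfeg_length n x : length (sfeg p n x) = Z.to_nat (ell_s p x).
Proof. unfold sfeg; rewrite length_map, length_seq; auto. Qed.

Lemma ell_s_bounds x :
  (1 <= ell_s p x)%Z /\ 2 <= 2 ^ Z.to_nat (ell_s p x) * (alpha_s p * pseq p x) /\
  IZR (ell_s p x) < - log2 (alpha_s p * pseq p x) + 2.
Proof. exact (sfe_length_bounds _ (alpha_s_pseq_range x)). Qed.

(* Distinct codepoints are at least [2^-l] apart, so their first [l] bits differ. *)
Lemma sfeg_prefix_free n x y r : length x = n -> length y = n ->
  sfeg p n x ++ r = sfeg p n y -> x = y.
Proof.
  intros Hx Hy E; destruct (list_eq_dec bool_dec x y) as [|Hne]; auto; exfalso.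
  set (L := Z.to_nat (ell_s p x)).
  pose proof (map_seq_prefix _ _ _ _ _ E) as Hbits.
  pose proof (Fbar_range n x Hx); pose proof (Fbar_range n y Hy).
  pose proof (floorR_eq_dist_lt1 _ _ (bin_digits_floorR_eq L (Fbar n x) (Fbar n y) ltac:(auto) ltac:(auto) Hbits)) as Hclose.
  destruct (ell_s_bounds x) as (_ & Hkraft & _); fold L in Hkraft.
  assert (Hgap : alpha_s p * pseq p x <= 2 * Rabs (Fbar n y - Fbar n x)).
  { pose proof (alpha_s_pseq_range x).
    destruct (gray_lt_total x y Hne) as [Hlt|Hlt].
    - pose proof (Fbar_gap_l n x y Hx Hy Hlt); rewrite Rabs_right; lra.
    - pose proof (Fbar_gap_r n y x Hy Hx Hlt); rewrite Rabs_left1; lra. }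
  replace (Fbar n x * 2 ^ L - Fbar n y * 2 ^ L) with (- ((Fbar n y - Fbar n x) * 2 ^ L)) in Hclose by ring.
  rewrite Rabs_Ropp, Rabs_mult, (Rabs_right (2 ^ L)) in Hclose by (apply Rle_ge, pow_le; lra).
  pose proof (pow_lt 2 L ltac:(lra)); pose proof (Rabs_pos (Fbar n y - Fbar n x)); nra.
Qed.

Lemma sfeg_nonempty n x : sfeg p n x <> [].
Proof.
  intros E; apply (f_equal (@length bool)) in E; rewrite sfeg_length in E.
  destruct (ell_s_bounds x) as (H & _); simpl in E; lia.
Qed.

Lemma sfeg_uniquely_decodable n xs ys :
  Forall (fun x => length x = n) xs -> Forall (fun y => length y = n) ys ->
  concat (map (sfeg p n) xs) = concat (map (sfeg p n) ys) -> xs = ys.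
Proof.
  apply prefix_free_uniquely_decodable.
  - intros x y r; apply sfeg_prefix_free.
  - intros x _; apply sfeg_nonempty.
Qed.

Lemma sfeg_expected_length n :
  sumR (fun x => pseq p x * INR (length (sfeg p n x))) (all_seqs n)
    < INR n * entropy p + 2 - log2 (alpha_s p).
Proof.
  assert (Hne : all_seqs n <> []).
  { intros E; pose proof (in_all_seqs (repeat false n)) as H; rewrite repeat_length, E in H; auto. }
  apply (Rlt_le_trans _ (sumR (fun x => (2 - log2 (alpha_s p)) * pseq p x
                                      - pseq p x * log2 (pseq p x)) (all_seqs n))).
  - apply sumR_lt; auto; intros x.
    destruct (ell_s_bounds x) as (H1 & _ & H3).
    rewrite sfeg_length, INR_IZR_INZ, Z2Nat.id by lia.
    rewrite log2_mult in H3 by (apply alpha_s_gt0 || apply pseq_pos).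
    pose proof (pseq_pos x); nra.
  - rewrite sumR_minus, sumR_scal, sumR_pseq_log2, sumR_pseq_all_seqs; lra.
Qed.

End SFEG.

Theorem theorem1 (p : bool -> R) (n : nat)
  (hp0 : 0 < p false < 1) (hp1 : 0 < p true < 1)
  (hsum : p false + p true = 1) (hneq : p false <> p true) :
  (forall xs ys : list (list bool),
      xs <> [] -> ys <> [] ->
      Forall (fun x => length x = n) xs ->
      Forall (fun y => length y = n) ys ->
      concat (map (sfeg p n) xs) = concat (map (sfeg p n) ys) ->
      xs = ys)
  /\
  sumR (fun x => pseq p x * INR (length (sfeg p n x))) (all_seqs n)
    < INR n * entropy p + 2 - log2 ((1 + rho p) / rho p).
Proof.
  assert (hpos : forall b, 0 < p b) by (intros []; lra).
  split.
  - intros xs ys _ _; apply sfeg_uniquely_decodable; auto.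
  - apply sfeg_expected_length; auto.
Qed.
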